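(* The classes of weakly Hausdorff spaces, of weakly Hausdorff compact spaces, of weakly Hausdorff sober spaces, and of weakly Hausdorff compact sober spaces are not $\omega$-projective. Moreover, there is an ep-system $(p_{mn}\colon X_n\to X_m)_{m\le n\in\mathbb N}$ of weakly Hausdorff compact sober spaces whose projective limit in the category of topological spaces is not weakly Hausdorff.
   Context: A projective system of topological spaces consists of a directed preordered set $(I,\sqsubseteq)$, spaces $X_i$ and continuous maps $p_{ij}\colon X_j\to X_i$ for $i\sqsubseteq j$ with $p_{ii}=\mathrm{id}$ and $p_{ij}\circ p_{jk}=p_{ik}$; its projective limit is its limit in the category of topological spaces. A class is $\omega$-projective if it is closed under projective limits of systems whose index set has a countable cofinal subset. The specialization preorder is $x\le y$ iff every open neighbourhood of $x$ contains $y$; $\uparrow x$ is the set of points above $x$. A space is weakly Hausdorff if for any two points $x,y$ and every open neighbourhood $W$ of $\uparrow x\cap\uparrow y$ there are open neighbourhoods $U$ of $x$ and $V$ of $y$ with $U\cap V\subseteq W$. Sober: $T_0$ and every irreducible closed set is the closure of a point. A continuous map $p\colon Y\to X$ is a projection if there is a continuous $e\colon X\to Y$ with $p\circ e=\mathrm{id}_X$ and $e\circ p\le\mathrm{id}_Y$ pointwise in the specialization preorder of $Y$; an ep-system is a projective system whose bonding maps $p_{ij}$ are projections. *)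

From HB Require Import structures.
From mathcomp Require Import all_boot all_order.
From mathcomp Require Import all_classical all_reals all_analysis.

Set Implicit Arguments.
Unset Strict Implicit.
Unset Printing Implicit Defensive.

Local Open Scope classical_set_scope.

Definition spec_le (T : topologicalType) (x y : T) : Prop :=
  forall U : set T, open U -> U x -> U y.

Definition upset (T : topologicalType) (x : T) : set T := [set y | spec_le x y].

Definition weakly_hausdorff (T : topologicalType) : Prop :=
  forall (x y : T) (W : set T), open W -> upset x `&` upset y `<=` W ->
    exists U V : set T, [/\ open U, U x, open V, V y & U `&` V `<=` W].

Definition compact_space (T : topologicalType) : Prop := compact [set: T].

Definition irreducible_closed (T : topologicalType) (A : set T) : Prop :=
  [/\ closed A, A !=set0 &
      forall B C : set T, closed B -> closed C -> A `<=` B `|` C ->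
        A `<=` B \/ A `<=` C].

Definition sober (T : topologicalType) : Prop :=
  @kolmogorov_space T /\
  forall A : set T, irreducible_closed A -> exists x : T, A = closure [set x].

Unset Implicit Arguments.

Definition directed_preorder (I : Type) (le : I -> I -> Prop) : Prop :=
  [/\ inhabited I, (forall i, le i i),
      (forall i j k, le i j -> le j k -> le i k) &
      (forall i j, exists k, le i k /\ le j k)].

(* Projective system: the bonding map [p i j : X j -> X i] is only
   meaningful (and only constrained) when [le i j]. *)
Definition projective_system (I : Type) (le : I -> I -> Prop)
    (X : I -> topologicalType) (p : forall i j : I, X j -> X i) : Prop :=
  [/\ directed_preorder I le,
      (forall i j, le i j -> continuous (p i j)),
      (forall i (x : X i), p i i x = x) &
      (forall i j k, le i j -> le j k -> forall x : X k,
          p i j (p j k x) = p i k x)].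

Definition is_projective_limit (I : Type) (le : I -> I -> Prop)
    (X : I -> topologicalType) (p : forall i j : I, X j -> X i)
    (L : topologicalType) (pi : forall i : I, L -> X i) : Prop :=
  [/\ (forall i, continuous (pi i)),
      (forall i j, le i j -> forall l : L, p i j (pi j l) = pi i l) &
      (forall (Z : topologicalType) (q : forall i : I, Z -> X i),
          (forall i, continuous (q i)) ->
          (forall i j, le i j -> forall z : Z, p i j (q j z) = q i z) ->
          exists! u : Z -> L, continuous u /\ forall i z, pi i (u z) = q i z)].

Definition has_countable_cofinal (I : Type) (le : I -> I -> Prop) : Prop :=
  exists J : set I, countable J /\ forall i, exists2 j, J j & le i j.

Definition omega_projective (C : topologicalType -> Prop) : Prop :=
  forall (I : Type) (le : I -> I -> Prop) (X : I -> topologicalType)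
         (p : forall i j : I, X j -> X i),
    projective_system I le X p -> has_countable_cofinal I le ->
    (forall i, C (X i)) ->
    forall (L : topologicalType) (pi : forall i, L -> X i),
      is_projective_limit I le X p L pi -> C L.

Definition is_projection (Y X : topologicalType) (p : Y -> X) : Prop :=
  continuous p /\
  exists e : X -> Y, [/\ continuous e, (forall x, p (e x) = x) &
                         (forall y, spec_le (e (p y)) y)].

Definition ep_system (I : Type) (le : I -> I -> Prop)
    (X : I -> topologicalType) (p : forall i j : I, X j -> X i) : Prop :=
  projective_system I le X p /\ forall i j, le i j -> is_projection (X j) (X i) (p i j).

From HB Require Import structures.
From mathcomp Require Import all_boot all_order.
From mathcomp Require Import all_classical all_reals all_analysis.
From mathcomp Require Import zify.

(* Each X_n is the Alexandrov space of a poset: a chain Chain 0 < ... < Chain n,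
   a point Loner, and pairwise incomparable points Peak k lying above Loner and
   above Chain i for i <= k.  Alexandrov spaces are weakly Hausdorff, and these
   are moreover compact (every point lies above Chain 0 or Loner) and sober
   (every nonempty subset has a maximal element).  The bonding maps clamp the
   chain; in the other direction the same formula is an embedding, which makes
   the system an ep-system.  In the limit, the threads Peak k converge both to
   the thread Chain n and to the thread Loner, but these two threads have no
   common upper bound: one would be some Peak k in coordinate 0, and then it
   could not lie above Chain (k+1) in coordinate k+1.  In a weakly Hausdorff
   space, however, any two limits of a proper filter have a common upper
   bound. *)

Import Order.TTheory.
Local Open Scope classical_set_scope.
Local Open Scope order_scope.

Lemma continuous_spec_le (S T : topologicalType) (f : S -> T) (x y : S) :
  continuous f -> spec_le x y -> spec_le (f x) (f y).
Proof.
move=> /continuousP f_cont xy U oU; exact: (xy (f @^-1` U) (f_cont U oU)).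
Qed.

Lemma weakly_hausdorff_cvg_upset (T : topologicalType) (F : set_system T)
    (x y : T) :
  weakly_hausdorff T -> ProperFilter F -> F --> x -> F --> y ->
  upset x `&` upset y !=set0.
Proof.
move=> wh PF Fx Fy; apply/set0P/negP => /eqP; rewrite -subset0 => xy0.
have [U [V [oU Ux oV Vy UV0]]] := wh x y set0 open0 xy0.
apply: (filter_not_empty F); apply: filterS UV0 (filterI _ _).
  exact/Fx/open_nbhs_nbhs.
exact/Fy/open_nbhs_nbhs.
Qed.

Section Alexandrov.
Context {d : Order.disp_t} (T : preorderType d).

Definition alexandrov : Type := T.

HB.instance Definition _ := Order.Preorder.on alexandrov.

Definition alexandrov_nbhs (x : alexandrov) : set_system alexandrov :=
  globally [set y | x <= y].

HB.instance Definition _ := hasNbhs.Build alexandrov alexandrov_nbhs.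

HB.instance Definition _ := Nbhs_isNbhsTopological.Build alexandrov
  (fun x => @globally_properfilter _ [set y | x <= y] x (lexx x))
  (fun x B (xB : alexandrov_nbhs x B) => xB x (lexx x))
  (fun x B (xB : alexandrov_nbhs x B) y xy z yz => xB z (le_trans xy yz)).

Lemma alexandrov_nbhsE (x : alexandrov) B :
  nbhs x B = ([set y | x <= y] `<=` B).
Proof. by []. Qed.

Lemma alexandrov_openP (A : set alexandrov) :
  open A <-> forall x y, x <= y -> A x -> A y.
Proof.
rewrite openE; split=> [oA x y xy /oA|upA x Ax]; first exact.
by move=> y xy; apply: upA Ax.
Qed.

Lemma open_upper (x : alexandrov) : open [set y | x <= y].
Proof. by apply/alexandrov_openP => y z yz /le_trans; apply. Qed.

Lemma alexandrov_spec_le (x y : alexandrov) : spec_le x y <-> x <= y.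
Proof.
split=> [/(_ _ (@open_upper x) (lexx x)) //|xy U /alexandrov_openP oU Ux].
exact: oU Ux.
Qed.

Lemma alexandrov_upset (x : alexandrov) : upset x = [set y | x <= y].
Proof. by apply/seteqP; split=> y /alexandrov_spec_le. Qed.

Lemma alexandrov_cvgP {F : set_system alexandrov} {FF : Filter F}
    {x : alexandrov} :
  F --> x <-> F [set y | x <= y].
Proof.
split=> [Fx|Fx B xB]; last exact: filterS Fx.
by apply: Fx; rewrite alexandrov_nbhsE.
Qed.

Lemma alexandrov_weakly_hausdorff : weakly_hausdorff alexandrov.
Proof.
move=> x y W _ xyW; exists [set z | x <= z], [set z | y <= z].
split; [exact: open_upper|exact: lexx|exact: open_upper|exact: lexx|].
by rewrite -!alexandrov_upset.
Qed.

Lemma compact_upper (x : alexandrov) : compact [set y | x <= y].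
Proof.
move=> F PF Fx; exists x; split; first exact: lexx.
move=> A B FA xB; have [z [Az xz]] := filter_ex (filterI FA Fx).
by exists z; split; [|apply: xB].
Qed.

Lemma alexandrov_compact (s : seq alexandrov) :
  (forall x, exists2 a, a \in s & a <= x) -> compact_space alexandrov.
Proof.
move=> sT; rewrite /compact_space.
have -> : [set: alexandrov] = \big[setU/set0]_(a <- s) [set y | a <= y].
  apply/seteqP; split=> // x _; have [a sa ax] := sT x.
  rewrite -bigcup_seq; exists a => //.
by apply: bigsetU_compact => a _; apply: compact_upper.
Qed.

Lemma alexandrov_closedP (A : set alexandrov) :
  closed A <-> forall x y, x <= y -> A y -> A x.
Proof.
split=> [cA x y xy Ay|downA x clAx]; last first.
  have [y [Ay xy]] := clAx [set y | x <= y] (fun y => id).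
  exact: downA xy Ay.
apply: cA => B xB; exists y; split => //; exact: xB.
Qed.

Lemma alexandrov_closure1 (x : alexandrov) : closure [set x] = [set y | y <= x].
Proof.
apply/seteqP; split=> y.
  by move=> /(_ [set z | y <= z] (fun z => id)) [z [-> ]].
by move=> yx B yB; exists x; split=> //; apply: yB.
Qed.

End Alexandrov.

Section AlexandrovSober.
Context {d : Order.disp_t} (T : porderType d).

Lemma alexandrov_kolmogorov : kolmogorov_space (alexandrov T).
Proof.
move=> x y xy; have [xley|xNley] := boolP (x <= y).
  exists [set z | y <= z]; right; split; first exact/mem_set.
  by apply/mem_set => /= ylex; move: xy; rewrite (@le_anti _ T x y) ?xley ?eqxx.
by exists [set z | x <= z]; left; split; apply/mem_set => //; apply/negP.
Qed.

Lemma alexandrov_sober :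
  (forall A : set T, A !=set0 ->
     exists2 m, A m & forall v, A v -> m <= v -> v = m) ->
  sober (alexandrov T).
Proof.
move=> has_max; split; first exact: alexandrov_kolmogorov.
move=> A [/alexandrov_closedP downA /has_max [m Am m_max] irrA].
exists m; rewrite alexandrov_closure1.
(* By maximality of m, A is covered by the closed sets below m and outside the
   upper set of m; irreducibility puts A in one of them, and m \in A excludes
   the second. *)
have notup_closed : closed [set v | A v /\ ~ m <= v].
  apply/alexandrov_closedP => x y xy [Ay mNy]; split; first exact: downA xy Ay.
  by move=> mx; apply/mNy/(le_trans mx xy).
have [Adown|Anotup] :
    A `<=` [set v | v <= m] \/ A `<=` [set v | A v /\ ~ m <= v].
- apply: irrA => [||v Av]; [|exact: notup_closed|].
  + by rewrite -alexandrov_closure1; exact: closed_closure.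
  + have [mv|mNv] := boolP (m <= v); [left|right].
      by rewrite /= (m_max v Av mv).
    by split=> //; apply/negP.
- by apply/seteqP; split=> // v vm; apply: downA vm Am.
- by have [_] := Anotup m Am; rewrite lexx.
Qed.

End AlexandrovSober.

Lemma homo_alexandrov_continuous {d d' : Order.disp_t} (T : preorderType d)
    (T' : preorderType d') (f : alexandrov T -> alexandrov T') :
  {homo f : x y / x <= y} -> continuous f.
Proof.
move=> f_homo x B; rewrite alexandrov_nbhsE => fxB.
exact: (fun y xy => fxB _ (f_homo _ _ xy)).
Qed.

Lemma cvg_initial {S : choiceType} {Y : topologicalType} (f : S -> Y)
    {F : set_system S} {FF : Filter F} {s : S} :
  F --> (s : initial_topology f) <-> f @ F --> f s.
Proof.
split=> [Fs B /(@initial_continuous _ _ f s)|fFs A]; first exact: Fs.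
move=> [_ [[C oC <-] Cfs sCA]]; apply: filterS sCA _; apply: fFs.
exact: open_nbhs_nbhs.
Qed.

Lemma cvg_prod {I : Type} {X : I -> topologicalType}
    {F : set_system (prod_topology X)} {FF : Filter F} {s : prod_topology X} :
  F --> s <-> forall i, (fun t => t i) @ F --> s i.
Proof.
rewrite cvg_sup.
by split=> Fs i; have := Fs i;
  rewrite (cvg_initial (fun t : prod_topology X => t i)).
Qed.

Section ThreadLimit.
Context (I : Type) (le : I -> I -> Prop) (X : I -> topologicalType)
  (p : forall i j : I, X j -> X i).

Definition threads : set (prod_topology X) :=
  [set s : prod_topology X | forall i j, le i j -> p i j (s j) = s i].

Definition thread_limit : topologicalType := set_type threads.

Definition thread_proj i (s : thread_limit) : X i := set_val s i.

Definition thread_of (s : prod_topology X) (thr_s : threads s) : thread_limit :=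
  SigSub (mem_set thr_s).

Lemma cvg_threadP {F : set_system thread_limit} {FF : Filter F}
    {s : thread_limit} :
  F --> s <-> forall i, thread_proj i @ F --> thread_proj i s.
Proof. by rewrite cvg_initial cvg_prod. Qed.

Lemma thread_proj_continuous i : continuous (thread_proj i).
Proof. by move=> s; move: (@cvg_id _ (nbhs s)) => /cvg_threadP; apply. Qed.

Lemma thread_proj_compat i j (s : thread_limit) :
  le i j -> p i j (thread_proj j s) = thread_proj i s.
Proof. by case: s => s thr_s; apply: (set_mem thr_s). Qed.

Lemma thread_limit_is_projective_limit :
  is_projective_limit I le X p thread_limit thread_proj.
Proof.
split=> [|i j ij s|Z q q_cont q_comp].
- exact: thread_proj_continuous.
- exact: thread_proj_compat.
have thr_q z : threads (fun i => q i z) by move=> i j ij; apply: q_comp.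
exists (fun z => thread_of _ (thr_q z)); split.
  by split=> [z|//]; apply/cvg_threadP => i; apply: q_cont.
move=> v [_ vq]; apply/funext => z.
apply/val_inj/functional_extensionality_dep => i.
by rewrite -[RHS]/(thread_proj i (v z)) vq.
Qed.

End ThreadLimit.

Lemma leq_directed_preorder : directed_preorder nat (fun m n => (m <= n)%N).
Proof.
split=> [|//|m n k|m n]; [exact: inhabits 0%N|exact: leq_trans|].
by exists (maxn m n); rewrite leq_maxl leq_maxr.
Qed.

Lemma omega_projective_nat (C : topologicalType -> Prop)
    (X : nat -> topologicalType) (p : forall m n : nat, X n -> X m)
    (L : topologicalType) (pi : forall n, L -> X n) :
  omega_projective C -> projective_system nat (fun m n => (m <= n)%N) X p ->
  (forall n, C (X n)) ->
  is_projective_limit nat (fun m n => (m <= n)%N) X p L pi -> C L.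
Proof.
move=> C_proj sys CX lim; apply: (C_proj _ _ X p sys _ CX L pi lim).
by exists setT; split=> [|n]; [exact: countableP|exists n].
Qed.

Inductive fan_pt (n : nat) : Type := Chain of 'I_n.+1 | Loner | Peak of nat.
Arguments Loner {n}.
Arguments Chain {n}.
Arguments Peak {n}.

Definition fan_le {n} (x y : fan_pt n) : bool :=
  match x, y with
  | Chain i, Chain j => (i <= j)%N
  | Chain i, Peak k => (i <= k)%N
  | Loner, Loner | Loner, Peak _ => true
  | Peak k, Peak l => k == l
  | _, _ => false
  end.

Lemma fan_le_refl n : reflexive (@fan_le n).
Proof. by case=> //= k; rewrite eqxx. Qed.

Lemma fan_le_anti n : antisymmetric (@fan_le n).
Proof.
case=> [i||k] [j||l] //=; rewrite ?andbF // => /andP[xy yx].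
  by congr Chain; apply/val_inj/eqP; rewrite eqn_leq xy.
by rewrite (eqP xy).
Qed.

Lemma fan_le_trans n : transitive (@fan_le n).
Proof.
case=> [i||k] [j||l] [m||o] //=; try exact: leq_trans.
- by move=> jk /eqP <-.
- by move=> /eqP -> /eqP ->.
Qed.

HB.instance Definition _ n := gen_eqMixin (fan_pt n).
HB.instance Definition _ n := gen_choiceMixin (fan_pt n).
HB.instance Definition _ n :=
  Order.Le_isPOrder.Build (Order.Disp tt tt) (fan_pt n)
  (@fan_le_refl n) (@fan_le_anti n) (@fan_le_trans n).

Lemma fan_leE n (x y : fan_pt n) : (x <= y) = fan_le x y.
Proof. by []. Qed.

Definition fan (n : nat) : topologicalType := alexandrov (fan_pt n).

Lemma fan_has_maximal n (A : set (fan_pt n)) :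
  A !=set0 -> exists2 m, A m & forall v, A v -> m <= v -> v = m.
Proof.
move=> [x0 Ax0]; have [[k Ak]|noPeak] := pselect (exists k, A (Peak k)).
  by exists (Peak k) => // -[i||l] _ //= /eqP <-.
have [ALoner|noLoner] := pselect (A Loner).
  by exists Loner => // -[i||l] Av //= _; case: noPeak; exists l.
have [i0 Ai0] : exists i, A (Chain i).
  case: x0 Ax0 => [i||k] Ax0; [by exists i|by []|].
  by case: noPeak; exists k.
have [i /asboolP Ai i_max] :=
  @arg_maxnP _ i0 (fun i => `[< A (Chain i) >]) val (asboolT Ai0).
exists (Chain i) => // -[j||l] Av; rewrite fan_leE //= => ij.
  congr Chain; apply/val_inj/eqP; rewrite eqn_leq ij andbT.
  exact: i_max (asboolT Av).
by case: noPeak; exists l.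
Qed.

Lemma fan_sober n : sober (fan n).
Proof. exact/alexandrov_sober/fan_has_maximal. Qed.

Lemma fan_compact n : compact_space (fan n).
Proof.
apply: (alexandrov_compact _ [:: Chain ord0; Loner]) => -[i||k].
- by exists (Chain ord0); rewrite ?inE ?eqxx.
- by exists Loner; rewrite ?inE ?eqxx ?orbT.
- by exists Loner; rewrite ?inE ?eqxx ?orbT.
Qed.

Definition fan_proj m n (x : fan n) : fan m :=
  match x with
  | Chain i => Chain (inord (minn i m))
  | Loner => Loner
  | Peak k => Peak k
  end.

Lemma val_inord_minn m i : (inord (minn i m) : 'I_m.+1) = minn i m :> nat.
Proof. by rewrite inordK // ltnS geq_minr. Qed.

Lemma fan_proj_homo m n : {homo fan_proj m n : x y / x <= y}.
Proof.
by move=> [i||k] [j||l]; rewrite !fan_leE //= ?val_inord_minn; lia.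
Qed.

Lemma fan_proj_id n (x : fan n) : fan_proj n n x = x.
Proof.
case: x => [i||k] //=; congr Chain; apply/val_inj => /=.
by rewrite val_inord_minn; have := ltn_ord i; lia.
Qed.

Lemma fan_proj_comp m n k (x : fan k) :
  (m <= n)%N -> fan_proj m n (fan_proj n k x) = fan_proj m k x.
Proof.
case: x => [i||l] //= mn; congr Chain; apply/val_inj => /=.
by rewrite !val_inord_minn; lia.
Qed.

Lemma fan_proj_section m n (x : fan m) :
  (m <= n)%N -> fan_proj m n (fan_proj n m x) = x.
Proof. by move=> mn; rewrite fan_proj_comp // fan_proj_id. Qed.

Lemma fan_proj_deflation m n (y : fan n) :
  (m <= n)%N -> fan_proj n m (fan_proj m n y) <= y.
Proof.
by case: y => [i||k] mn; rewrite fan_leE //= ?eqxx ?val_inord_minn; lia.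
Qed.

Lemma fan_proj_continuous m n : continuous (fan_proj m n).
Proof. apply: homo_alexandrov_continuous; exact: fan_proj_homo. Qed.

Lemma fan_ep_system : ep_system nat (fun m n => (m <= n)%N) fan fan_proj.
Proof.
split=> [|m n mn].
  split; [exact: leq_directed_preorder|move=> *; exact: fan_proj_continuous|
          exact: fan_proj_id|move=> *; exact: fan_proj_comp].
split; first exact: fan_proj_continuous.
exists (fan_proj n m); split=> [|x|y]; first exact: fan_proj_continuous.
  exact: fan_proj_section.
by apply/alexandrov_spec_le/fan_proj_deflation.
Qed.

Definition fan_limit : topologicalType :=
  thread_limit nat (fun m n => (m <= n)%N) fan fan_proj.

Local Notation fan_limit_proj :=
  (thread_proj nat (fun m n => (m <= n)%N) fan fan_proj).
Local Notation fan_thread :=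
  (thread_of nat (fun m n => (m <= n)%N) fan fan_proj).

Lemma fan_proj_chain_top m n :
  (m <= n)%N -> fan_proj m n (Chain ord_max) = Chain ord_max.
Proof.
by move=> mn; congr Chain; apply/val_inj; rewrite /= val_inord_minn; lia.
Qed.

Definition top_thread : fan_limit :=
  fan_thread (fun n => Chain ord_max) fan_proj_chain_top.
Definition loner_thread : fan_limit :=
  fan_thread (fun n => Loner) (fun m n _ => erefl).
Definition peak_thread k : fan_limit :=
  fan_thread (fun n => Peak k) (fun m n _ => erefl).

Lemma fan_upper_bound n (z : fan n) :
  Chain ord_max <= z -> Loner <= z -> exists2 k, z = Peak k & (n <= k)%N.
Proof. by case: z => [i||k]; rewrite !fan_leE //= => nk _; exists k. Qed.

Lemma peak_thread_cvg_top : peak_thread @ \oo --> top_thread.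
Proof. apply/cvg_threadP => n; apply/alexandrov_cvgP; exact: nbhs_infty_ge. Qed.

Lemma peak_thread_cvg_loner : peak_thread @ \oo --> loner_thread.
Proof.
by apply/cvg_threadP => n; apply/alexandrov_cvgP; apply: (@filterE _ \oo).
Qed.

Lemma fan_limit_not_weakly_hausdorff : ~ weakly_hausdorff fan_limit.
Proof.
move=> wh; have [z [top_z loner_z]] := weakly_hausdorff_cvg_upset _ _ _ _ wh _
  peak_thread_cvg_top peak_thread_cvg_loner.
have peak_z n : exists2 k, fan_limit_proj n z = Peak k & (n <= k)%N.
  have proj_le x :=
    continuous_spec_le _ _ _ x z (thread_proj_continuous _ _ _ _ n).
  apply: fan_upper_bound; apply/alexandrov_spec_le.
  - exact: proj_le top_thread top_z.
  - exact: proj_le loner_thread loner_z.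
have [k z0 _] := peak_z 0%N; have [l zk kl] := peak_z k.+1.
have := thread_proj_compat _ _ _ _ 0%N k.+1 z isT.
by rewrite zk z0 /= => -[lk]; rewrite lk ltnn in kl.
Qed.

Lemma fan_wh_compact_sober n :
  [/\ weakly_hausdorff (fan n), compact_space (fan n) & sober (fan n)].
Proof.
split; [exact: alexandrov_weakly_hausdorff|exact: fan_compact|exact: fan_sober].
Qed.

Theorem corollary5p5 :
  [/\ ~ omega_projective weakly_hausdorff,
      ~ omega_projective (fun T => weakly_hausdorff T /\ compact_space T),
      ~ omega_projective (fun T => weakly_hausdorff T /\ sober T),
      ~ omega_projective
          (fun T => [/\ weakly_hausdorff T, compact_space T & sober T]) &
      exists (X : nat -> topologicalType) (p : forall m n : nat, X n -> X m),
        [/\ ep_system nat (fun m n : nat => (m <= n)%N) X p,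
            (forall n, [/\ weakly_hausdorff (X n), compact_space (X n)
                         & sober (X n)]) &
            exists (L : topologicalType) (pi : forall n, L -> X n),
              is_projective_limit nat (fun m n : nat => (m <= n)%N) X p L pi /\
              ~ weakly_hausdorff L]].
Proof.
have [sys _] := fan_ep_system.
have lim :=
  thread_limit_is_projective_limit nat (fun m n => (m <= n)%N) fan fan_proj.
have not_omega (C : topologicalType -> Prop) :
    (forall n, C (fan n)) -> (C fan_limit -> weakly_hausdorff fan_limit) ->
    ~ omega_projective C.
  move=> C_fan C_wh C_proj; apply/fan_limit_not_weakly_hausdorff/C_wh.
  exact: omega_projective_nat C_proj sys C_fan lim.
split.
- by apply: not_omega => // n; case: (fan_wh_compact_sober n).
- by apply: not_omega => [n|[]] //; case: (fan_wh_compact_sober n).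
- by apply: not_omega => [n|[]] //; case: (fan_wh_compact_sober n).
- by apply: not_omega => [n|[]] //; case: (fan_wh_compact_sober n).
- exists fan, fan_proj.
  split; [exact: fan_ep_system|exact: fan_wh_compact_sober|].
  exists fan_limit, fan_limit_proj.
  by split; last exact: fan_limit_not_weakly_hausdorff.
Qed.
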